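(* The class of ($ISK_4$, wheel)-free graphs is 2-cutset-safe.
   Context: All graphs are finite and simple. A graph is $ISK_4$-free if it contains no induced subgraph isomorphic to a subdivision of $K_4$ (a graph obtained from $K_4$ by replacing edges by internally vertex-disjoint paths). A hole is a cycle with no chords (a chordless cycle). A wheel $(H,v)$ consists of a hole $H$ and a vertex $v$ with at least three neighbours in $H$; a graph is wheel-free if it contains no wheel as an induced subgraph. A connected graph $G$ has a 1-cutset if there is $x\in V(G)$ with $G\setminus\{x\}$ having at least two components. A 2-cutset is a pair of vertices $u,v$ with $G\setminus\{u,v\}$ not connected. For a component $C$ of $G\setminus\{u,v\}$, $\operatorname{cl}(C)$ is obtained from the subgraph induced by $C\cup\{u,v\}$ by adding the edge $uv$, and $\operatorname{cl}^*(C)$ is obtained from $\operatorname{cl}(C)$ by subdividing the edge $uv$ exactly once. A hereditary class $\mathcal{F}$ is 2-cutset-safe if for every $G\in\mathcal{F}$ with no 1-cutset, every 2-cutset $\{u,v\}$ of $G$ and every component $C$ of $G\setminus\{u,v\}$, either $\operatorname{cl}(C)\in\mathcal{F}$ or $\operatorname{cl}^*(C)\in\mathcal{F}$. *)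

From mathcomp Require Import all_boot.
Set Implicit Arguments. Unset Strict Implicit. Unset Printing Implicit Defensive.

Record sgraph := SGraph { vtx :> finType; adj : rel vtx }.
Arguments adj : clear implicits.

Definition simple (G : sgraph) : Prop :=
  symmetric (adj G) /\ irreflexive (adj G).

Section GraphNotions.
Variable G : sgraph.
Local Notation e := (adj G).

Definition walk (p : seq G) : bool :=
  if p is x :: p' then path e x p' else false.

Definition is_path_from_to (p : seq G) (a b : G) : Prop :=
  [/\ walk p, uniq p, head a p = a & last a p = b].

Definition consec (p : seq G) (x y : G) : Prop :=
  exists p1 p2, p = p1 ++ x :: y :: p2 \/ p = p1 ++ y :: x :: p2.

(* G contains an induced subgraph isomorphic to a subdivision of K4:
   four distinct branch vertices a i, and for each pair i < j a path P i j
   from a i to a j; the paths are internally vertex-disjoint (and their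
   interiors avoid the branch vertices), and every edge of G between two
   vertices of the union of the paths is an edge of one of the paths. *)
Definition contains_ISK4 : Prop :=
  exists (a : 'I_4 -> G) (P : 'I_4 -> 'I_4 -> seq G),
  let inU x := exists i j : 'I_4, i < j /\ x \in P i j in
  [/\ injective a,
      (forall i j : 'I_4, i < j -> is_path_from_to (P i j) (a i) (a j)),
      (forall (i j : 'I_4) x, i < j -> x \in P i j -> x \in codom a ->
          x = a i \/ x = a j),
      (forall (i j k l : 'I_4) x, i < j -> k < l -> (i, j) != (k, l) ->
          x \in P i j -> x \in P k l -> x \in codom a) &
      (forall x y, inU x -> inU y -> e x y ->
          exists i j : 'I_4, i < j /\ consec (P i j) x y)].

Definition ISK4_free : Prop := ~ contains_ISK4.

(* A hole: a chordless cycle of length at least 4, given by the cyclic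
   sequence c of its vertices; two vertices of c are adjacent in G iff
   they are cyclically consecutive on c. *)
Definition hole (c : seq G) : Prop :=
  [/\ uniq c, 4 <= size c &
      {in c &, forall x y, e x y = (next c x == y) || (next c y == x)}].

Definition contains_wheel : Prop :=
  exists (c : seq G) (v : G), [/\ hole c, v \notin c & 3 <= count (e v) c].

Definition wheel_free : Prop := ~ contains_wheel.

Definition adj_in (S : {set G}) : rel G :=
  fun x y => [&& x \in S, y \in S & e x y].

Definition connected_in (S : {set G}) : Prop :=
  forall x y, x \in S -> y \in S -> connect (adj_in S) x y.

Definition is_component (S C : {set G}) : Prop :=
  [/\ C \subset S, C != set0 &
      forall x y, x \in C -> y \in S -> (y \in C) = connect (adj_in S) x y].

Definition has_1cutset : Prop :=
  exists x : G, ~ connected_in (~: [set x]).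

Definition is_2cutset (u v : G) : Prop :=
  u != v /\ ~ connected_in (~: [set u; v]).

End GraphNotions.

Definition ISK4_wheel_free (G : sgraph) : Prop :=
  ISK4_free G /\ wheel_free G.

Section Closures.
Variables (G : sgraph) (u v : G) (C : {set G}).

Definition clV : finType := {x : G | x \in C :|: [set u; v]}.

Definition is_uv (x y : G) : bool :=
  ((x == u) && (y == v)) || ((x == v) && (y == u)).

Definition cl : sgraph :=
  @SGraph clV (fun x y => adj G (val x) (val y) || is_uv (val x) (val y)).

(* cl*(C): cl(C) with the edge uv subdivided once; the new vertex is None. *)
Definition cl_star_adj (x y : option clV) : bool :=
  match x, y with
  | Some x, Some y => adj G (val x) (val y) && ~~ is_uv (val x) (val y)
  | Some x, None | None, Some x => (val x == u) || (val x == v)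
  | None, None => false
  end.

Definition cl_star : sgraph := @SGraph (option clV : finType) cl_star_adj.

End Closures.

From mathcomp Require Import all_boot zify.
Set Implicit Arguments. Unset Strict Implicit. Unset Printing Implicit Defensive.

(* If u and v are adjacent, cl(C) is an induced subgraph of G.  Otherwise, since G
   has no 1-cutset, u and v are joined by a path avoiding C, through another
   component of G \ {u, v}; a shortest such path u Q v is chordless and Q has no
   neighbour in C.  So G[C + {u, v} + Q] is obtained from cl*(C) by replacing its
   subdivision vertex w with the path Q, and this replacement carries an induced
   ISK4 or wheel of cl*(C) to one of G: branch vertices and wheel centres have three
   neighbours, hence differ from w, and a path or hole through w only gets longer. *)

Section ConsecutivePairs.
Variable T : eqType.
Implicit Types (s : seq T) (x y z : T).

Definition pairs s := zip s (behead s).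

Definition linked s x y := ((x, y) \in pairs s) || ((y, x) \in pairs s).

Lemma pairs_cons2 x y s : pairs [:: x, y & s] = (x, y) :: pairs (y :: s).
Proof. by []. Qed.

Lemma pairsP s x y : (x, y) \in pairs s <-> exists s1 s2, s = s1 ++ x :: y :: s2.
Proof.
split; last first.
  case=> s1 [s2 ->]; elim: s1 => [|a s1 IH]; first by rewrite pairs_cons2 mem_head.
  by case: s1 IH => [|b s1] IH; rewrite /= in_cons IH orbT.
elim: s => [|a [|b s] IH] //; rewrite pairs_cons2 in_cons.
case/orP=> [/eqP [-> ->]|/IH [s1 [s2 ->]]]; first by exists [::], s.
by exists (a :: s1), s2.
Qed.

Lemma mem_pairs s x y : (x, y) \in pairs s -> (x \in s) /\ (y \in s).
Proof. by case/pairsP=> s1 [s2 ->]; rewrite !mem_cat !in_cons !eqxx !orbT. Qed.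

Lemma linked_mem s x y : linked s x y -> (x \in s) /\ (y \in s).
Proof. by case/orP=> /mem_pairs []. Qed.

Lemma pairs_rev s x y : ((x, y) \in pairs (rev s)) = ((y, x) \in pairs s).
Proof.
suff imp t a b : (a, b) \in pairs t -> (b, a) \in pairs (rev t).
  by apply/idP/idP => /imp //; rewrite revK.
case/pairsP=> t1 [t2 ->]; apply/pairsP; exists (rev t2), (rev t1).
by rewrite rev_cat !rev_cons -!cats1 -!catA.
Qed.

Lemma linked_rev s x y : linked (rev s) x y = linked s x y.
Proof. by rewrite /linked !pairs_rev orbC. Qed.

Lemma pairs_catl s1 s2 x y : (x, y) \in pairs s1 -> (x, y) \in pairs (s1 ++ s2).
Proof. by case/pairsP=> a [b ->]; apply/pairsP; exists a, (b ++ s2); rewrite -catA. Qed.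

Lemma pairs_catr s1 s2 x y : (x, y) \in pairs s2 -> (x, y) \in pairs (s1 ++ s2).
Proof. by case/pairsP=> a [b ->]; apply/pairsP; exists (s1 ++ a), b; rewrite -catA. Qed.

Lemma linked_catl s1 s2 x y : linked s1 x y -> linked (s1 ++ s2) x y.
Proof. by case/orP=> /(pairs_catl s2) H; rewrite /linked H ?orbT. Qed.

Lemma linked_catr s1 s2 x y : linked s2 x y -> linked (s1 ++ s2) x y.
Proof. by case/orP=> /(pairs_catr s1) H; rewrite /linked H ?orbT. Qed.

Lemma mem_pairs_cat_cons s1 x s2 pq :
  (pq \in pairs (s1 ++ x :: s2)) = (pq \in pairs (rcons s1 x)) || (pq \in pairs (x :: s2)).
Proof.
elim: s1 => [|a [|b s1] IH] //.
- by rewrite /= pairs_cons2 !in_cons orbF.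
- by rewrite /= !pairs_cons2 !in_cons -orbA -IH.
Qed.

Lemma path_pairs (e : rel T) x s :
  path e x s = all (fun pq => e pq.1 pq.2) (pairs (x :: s)).
Proof. by elim: s x => [|y s IH] x //=; rewrite IH. Qed.

Lemma next_pairs z c x y : uniq (z :: c) -> x \in z :: c ->
  (next (z :: c) x == y) = ((x, y) \in pairs (rcons (z :: c) z)).
Proof.
move=> Uc Hx; apply/eqP/idP => [<-|Hxy].
  apply: (next_cycle (e := fun a b => (a, b) \in pairs (rcons (z :: c) z))) Hx.
  by rewrite /cycle path_pairs; apply/allP => -[a b].
by move: (cycle_next Uc); rewrite /cycle path_pairs => /allP /(_ _ Hxy) /eqP.
Qed.

End ConsecutivePairs.

Lemma pairs_map (T U : eqType) (f : T -> U) s :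
  pairs (map f s) = map (fun pq => (f pq.1, f pq.2)) (pairs s).
Proof. by elim: s => [|x [|y s] IH] //=; rewrite -IH. Qed.

Lemma linked_map (T U : eqType) (f : T -> U) s x y :
  linked s x y -> linked (map f s) (f x) (f y).
Proof.
by rewrite /linked pairs_map => /orP [] H; apply/orP; [left|right];
  apply: (map_f (fun pq => (f pq.1, f pq.2)) H).
Qed.

Lemma linked_splice (T : eqType) (l : seq T) x (M : seq T) y r a b :
  linked (rcons l x ++ M ++ y :: r) a b =
  [|| linked (rcons l x) a b, linked (x :: rcons M y) a b | linked (y :: r) a b].
Proof.
have splice pq : (pq \in pairs (rcons l x ++ M ++ y :: r)) =
    [|| pq \in pairs (rcons l x), pq \in pairs (x :: rcons M y) | pq \in pairs (y :: r)].
  by rewrite cat_rcons mem_pairs_cat_cons -cat_cons mem_pairs_cat_cons orbA.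
by rewrite /linked !splice; case: (_ \in _); case: (_ \in _); case: (_ \in _);
  rewrite ?orbT ?orbF.
Qed.

Lemma linked_map_inv (T U : eqType) (f : T -> U) s a b : linked (map f s) a b ->
  exists y y', [/\ linked s y y', a = f y & b = f y'].
Proof.
rewrite /linked pairs_map => /orP [] /mapP [[y y'] Hyy' [-> ->]].
  by exists y, y'; rewrite /linked Hyy'.
by exists y', y; rewrite /linked Hyy' orbT.
Qed.

Section GraphBasics.
Variable G : sgraph.
Hypothesis symG : symmetric (adj G).
Implicit Types (s c : seq G) (x y z : G).

Lemma consec_linked s x y : consec s x y <-> linked s x y.
Proof.
split=> [[s1 [s2 [E|E]]]|/orP [] /pairsP [s1 [s2 E]]].
- by apply/orP; left; apply/pairsP; exists s1, s2.
- by apply/orP; right; apply/pairsP; exists s1, s2.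
- by exists s1, s2; left.
- by exists s1, s2; right.
Qed.

Lemma walk_linked s :
  walk s <-> s != [::] /\ (forall x y, linked s x y -> adj G x y).
Proof.
case: s => [|x s]; first by split=> // [][].
rewrite /walk path_pairs; split=> [/allP Hs|[_ Hs]].
  by split=> // a b /orP [] /Hs //=; rewrite symG.
by apply/allP => -[a b] Hab; apply: Hs; rewrite /linked Hab.
Qed.

Lemma hole_linked z c : hole (z :: c) <->
  [/\ uniq (z :: c), 4 <= size (z :: c) &
      {in z :: c &, forall x y, adj G x y = linked (rcons (z :: c) z) x y}].
Proof.
split=> -[Uc Sc Hc]; split=> // x y Hx Hy.
all: by rewrite Hc // /linked !next_pairs.
Qed.

Lemma hole_rot n c : hole c -> hole (rot n c).
Proof.
case=> Uc Sc Hc; split; rewrite ?rot_uniq ?size_rot //.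
by move=> x y; rewrite !mem_rot => Hx Hy; rewrite !next_rot // Hc.
Qed.

Lemma hole_rot_mid c x : hole c -> x \in c ->
  exists y y' r, hole [:: y, x, y' & r] /\ perm_eq [:: y, x, y' & r] c.
Proof.
move=> Hc /rot_to [i t Er].
have Hp : perm_eq (rotr 1 (rot i c)) c by rewrite perm_rotr perm_rot.
have : hole (rotr 1 (rot i c)) by do 2 apply: hole_rot.
case/lastP: t Er => [|t y] Er; rewrite Er in Hp *; first by case.
rewrite -rcons_cons rotr1_rcons in Hp *; clear Er.
by case: t Hp => [|y' r] Hp Hc'; [case: Hc' | exists y, y', r].
Qed.

Lemma hole_walk z c : hole (z :: c) -> walk (z :: c).
Proof.
case/hole_linked=> _ _ Hc; apply/walk_linked; split=> // a b Hab.
have [Ha Hb] := linked_mem Hab.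
by rewrite Hc // -cats1 linked_catl.
Qed.

Lemma path_from_to_rev s x y : is_path_from_to s x y -> is_path_from_to (rev s) y x.
Proof.
case=> /walk_linked [Hs Hadj] Us Hh Hl; split.
- apply/walk_linked; split; first by rewrite -size_eq0 size_rev size_eq0.
  by move=> a b; rewrite linked_rev; apply: Hadj.
- by rewrite rev_uniq.
- by case/lastP: s Hs Hl {Hadj Us Hh} => // s a _; rewrite rev_rcons last_rcons.
- by case: s Hs Hh {Hadj Us Hl} => // a s _ /= ->; rewrite rev_cons last_rcons.
Qed.

Lemma path_head_nbr s x y : is_path_from_to s x y -> x != y ->
  exists2 n, n \in s & adj G x n.
Proof.
case=> /walk_linked [_ Hadj] _ Hh Hl Hxy.
case: s Hh Hl Hadj => [|x0 [|n s]] /= Hh Hl Hadj.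
- by rewrite Hl eqxx in Hxy.
- by rewrite -Hh Hl eqxx in Hxy.
- by exists n; rewrite ?inE ?eqxx ?orbT // -Hh; apply: Hadj; rewrite /linked mem_head.
Qed.

End GraphBasics.

(* [contains_ISK4 G] unfolds to [exists a P, isk4_model a P]. *)
Definition isk4_model (G : sgraph) (a : 'I_4 -> G) (P : 'I_4 -> 'I_4 -> seq G) :=
  let inU x := exists i j : 'I_4, i < j /\ x \in P i j in
  [/\ injective a,
      (forall i j : 'I_4, i < j -> is_path_from_to (P i j) (a i) (a j)),
      (forall (i j : 'I_4) x, i < j -> x \in P i j -> x \in codom a ->
          x = a i \/ x = a j),
      (forall (i j k l : 'I_4) x, i < j -> k < l -> (i, j) != (k, l) ->
          x \in P i j -> x \in P k l -> x \in codom a) &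
      (forall x y, inU x -> inU y -> adj G x y ->
          exists i j : 'I_4, i < j /\ consec (P i j) x y)].

Definition branch_path (T : Type) (P : 'I_4 -> 'I_4 -> seq T) (i j : 'I_4) :=
  if i < j then P i j else P j i.

Lemma three_others (i : 'I_4) : exists j1 j2 j3 : 'I_4,
  [&& j1 != i, j2 != i, j3 != i, j1 != j2, j1 != j3 & j2 != j3].
Proof.
case: i => [[|[|[|[|k]]]] Hi] //.
- by exists (@Ordinal 4 1 isT), (@Ordinal 4 2 isT), (@Ordinal 4 3 isT).
- by exists (@Ordinal 4 0 isT), (@Ordinal 4 2 isT), (@Ordinal 4 3 isT).
- by exists (@Ordinal 4 0 isT), (@Ordinal 4 1 isT), (@Ordinal 4 3 isT).
- by exists (@Ordinal 4 0 isT), (@Ordinal 4 1 isT), (@Ordinal 4 2 isT).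
Qed.

Section ISK4Model.
Variables (G : sgraph) (a : 'I_4 -> G) (P : 'I_4 -> 'I_4 -> seq G).
Hypotheses (symG : symmetric (adj G)) (irrG : irreflexive (adj G)).
Hypothesis model : isk4_model a P.

Lemma branch_path_nbr i j : j != i -> exists2 n, n \in branch_path P i j & adj G (a i) n.
Proof.
case: model => a_inj Hpath _ _ _ Hji.
have Ha : a i != a j by apply: contra Hji => /eqP /a_inj ->.
rewrite /branch_path; case: ltngtP => [lt_ij|lt_ji|/val_inj eq_ij].
- exact: (path_head_nbr symG (Hpath _ _ lt_ij) Ha).
- have [n] := path_head_nbr symG (path_from_to_rev symG (Hpath _ _ lt_ji)) Ha.
  by rewrite mem_rev; exists n.
- by rewrite eq_ij eqxx in Hji.
Qed.

Lemma branch_path_codom i j x : j != i -> x \in branch_path P i j -> x \in codom a ->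
  x = a i \/ x = a j.
Proof.
case: model => _ _ Hend _ _ Hji; rewrite /branch_path.
case: ltngtP => [lt_ij|lt_ji|/val_inj eq_ij] Hx Ha.
- exact: Hend.
- by case: (Hend _ _ _ lt_ji Hx Ha); [right|left].
- by rewrite eq_ij eqxx in Hji.
Qed.

Lemma branch_path_meet i j k x : j != i -> k != i -> j != k ->
  x \in branch_path P i j -> x \in branch_path P i k -> x \in codom a.
Proof.
case: model => _ _ _ Hmeet _; rewrite -!(inj_eq val_inj) /= /branch_path => Hji Hki Hjk.
by case: ltngtP => Hij; case: ltngtP => Hik; apply: Hmeet => //;
  rewrite ?xpair_eqE -?(inj_eq val_inj) /=; lia.
Qed.

Lemma isk4_branch_degree i : exists2 s, uniq s & 3 <= count (adj G (a i)) s.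
Proof.
have [j1 [j2 [j3 /and5P [D1 D2 D3 D12 /andP [D13 D23]]]]] := three_others i.
have [n1 Hn1 A1] := branch_path_nbr D1.
have [n2 Hn2 A2] := branch_path_nbr D2.
have [n3 Hn3 A3] := branch_path_nbr D3.
have nbr_neq j k n n' : j != i -> k != i -> j != k -> n \in branch_path P i j ->
    n' \in branch_path P i k -> adj G (a i) n -> n != n'.
  move=> Hji Hki Hjk Hn Hn' An; apply/eqP => Enn'; subst n'.
  have Hc := branch_path_meet Hji Hki Hjk Hn Hn'.
  have Hni : n != a i by apply: contraTneq An => ->; rewrite irrG.
  have [|Ej] := branch_path_codom Hji Hn Hc; first by move/eqP: Hni.
  have [|Ek] := branch_path_codom Hki Hn' Hc; first by move/eqP: Hni.
  by case: model => a_inj _ _ _ _; move/eqP: Hjk; apply; apply: a_inj; rewrite -Ej Ek.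
exists [:: n1; n2; n3]; last by rewrite /= A1 A2 A3.
rewrite /= !inE !negb_or (nbr_neq j1 j2 n1 n2) //.
by rewrite (nbr_neq j1 j3 n1 n3) ?(nbr_neq j2 j3 n2 n3).
Qed.

End ISK4Model.

Section InducedSubgraph.
Variables (H G : sgraph) (f : H -> G).
Hypothesis f_inj : injective f.
Hypothesis f_adj : forall x y, adj H x y = adj G (f x) (f y).

Lemma walk_map s : walk s -> walk (map f s).
Proof.
case: s => //= x s; rewrite path_map.
by rewrite (@eq_path _ _ (adj H)) // => y z; rewrite /relpre f_adj.
Qed.

Lemma contains_ISK4_induced : contains_ISK4 H -> contains_ISK4 G.
Proof.
move=> [a [P [a_inj Hpath Hend Hmeet Hind]]].
exists (f \o a), (fun i j => map f (P i j)); split.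
- by move=> i j /f_inj /a_inj.
- move=> i j /Hpath [Ws Us Hh Hl]; split.
  + exact: walk_map.
  + by rewrite map_inj_uniq.
  + by case: (P i j) Hh => //= x s ->.
  + by rewrite /= (last_map f _ (a i)) Hl.
- move=> i j _ Hij /mapP [x Hx ->] /codomP [k /= /f_inj Ek].
  have : x \in codom a by apply/codomP; exists k.
  by case/(Hend _ _ _ Hij Hx) => ->; [left|right].
- move=> i j k l _ Hij Hkl Hne /mapP [x Hx ->] /mapP [y Hy /f_inj Exy]; subst y.
  by case/codomP: (Hmeet _ _ _ _ _ Hij Hkl Hne Hx Hy) => t ->; apply: codom_f.
move=> _ _ [i [j [Hij /mapP [x Hx ->]]]] [k [l [Hkl /mapP [y Hy ->]]]].
rewrite -f_adj => /Hind [| |i' [j' [Hij' /consec_linked Hxy]]].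
- by exists i, j.
- by exists k, l.
by exists i', j'; split=> //; apply/consec_linked; apply: linked_map.
Qed.

Lemma contains_wheel_induced : contains_wheel H -> contains_wheel G.
Proof.
move=> [c [h [[Uc Sc Hc] Hh Hcnt]]].
exists (map f c), (f h); split.
- split; rewrite ?map_inj_uniq ?size_map //.
  move=> _ _ /mapP [x Hx ->] /mapP [y Hy ->].
  by rewrite -f_adj Hc // !next_map // !inj_eq.
- by rewrite mem_map.
by rewrite count_map (eq_count (a2 := adj H h)) // => z; rewrite /= f_adj.
Qed.

Lemma ISK4_wheel_free_induced : ISK4_wheel_free G -> ISK4_wheel_free H.
Proof.
by case=> HG HW; split=> [/contains_ISK4_induced|/contains_wheel_induced].
Qed.

End InducedSubgraph.

Definition detour (T : eqType) (u v : T) (Q : seq T) := u :: Q ++ [:: v].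

Lemma uniq_detour (T : eqType) (u v : T) Q :
  uniq (detour u v Q) = [&& u \notin Q, v \notin Q, u != v & uniq Q].
Proof.
rewrite /= cat_uniq mem_cat !inE !negb_or /= andbT.
by case: (u \in Q); case: (v \in Q); case: (u == v); case: (uniq Q).
Qed.

Lemma mem_detour (T : eqType) (u v : T) Q z :
  (z \in detour u v Q) = [|| z == u, z \in Q | z == v].
Proof. by rewrite in_cons mem_cat mem_seq1. Qed.

Section Expansion.
Variables (T U : eqType) (w : T) (m : T -> U) (u v : U) (Q : seq U).
Implicit Types (s l r : seq T) (x y : T) (t R : seq U) (z : U).

Local Notation detour := (detour u v Q).

(* [t] is [s] with [w] replaced by [Q], oriented to match the images of the two
   neighbours of [w] in [s]. *)
Definition expansion s t : Prop :=
  (w \notin s /\ t = map m s) \/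
  exists l r x y R,
    [/\ s = rcons l x ++ w :: y :: r, w \notin rcons l x, w \notin y :: r,
        t = map m (rcons l x) ++ R ++ map m (y :: r) &
        (m x = u /\ m y = v /\ R = Q) \/ (m x = v /\ m y = u /\ R = rev Q)].

Lemma detour_orient x y R :
  (m x = u /\ m y = v /\ R = Q) \/ (m x = v /\ m y = u /\ R = rev Q) ->
  perm_eq R Q /\ linked (m x :: rcons R (m y)) =2 linked detour.
Proof.
case=> [[-> [-> ->]]|[-> [-> ->]]]; split=> //; first by rewrite /detour cats1.
- by rewrite perm_rev.
by move=> a b; rewrite -linked_rev rev_cons rev_rcons revK /detour cats1.
Qed.

Lemma expansion_mem s t z : expansion s t -> z \in t ->
  (exists2 y, y \in s & y != w /\ z = m y) \/ (w \in s /\ z \in Q).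
Proof.
case=> [[Hw ->] /mapP [y Hy ->]|[l [r [x [y [R [-> Hl Hr -> /detour_orient [pRQ _]]]]]]]].
  by left; exists y => //; split=> //; apply: (memPn Hw).
rewrite !mem_cat (perm_mem pRQ) => /or3P [/mapP [y' Hy' ->]|HQ|/mapP [y' Hy' ->]].
- by left; exists y'; rewrite ?mem_cat ?Hy' //; split=> //; apply: (memPn Hl).
- by right; rewrite mem_head orbT.
- left; exists y'; first by rewrite mem_cat in_cons Hy' !orbT.
  by split=> //; apply: (memPn Hr).
Qed.

Lemma expansion_linked s t z z' : expansion s t -> linked t z z' ->
  (exists y y', [/\ y != w, y' != w, linked s y y', z = m y & z' = m y'])
  \/ (w \in s /\ linked detour z z').
Proof.
have piece p : w \notin p -> subrel (linked p) (linked s) -> linked (map m p) z z' ->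
    exists y y', [/\ y != w, y' != w, linked s y y', z = m y & z' = m y'].
  move=> Hw ps /linked_map_inv [y [y' [Hyy' -> ->]]].
  have [Hy Hy'] := linked_mem Hyy'.
  by exists y, y'; rewrite (memPn Hw) ?(memPn Hw) ?ps.
case=> [[Hw ->]|[l [r [x [y [R [Es Hl Hr -> /detour_orient [_ Ldet]]]]]]]].
  by move/(piece s Hw (fun _ _ => id)); left.
rewrite map_rcons map_cons linked_splice Ldet -map_rcons -map_cons.
case/or3P=> [Hp|Hzz'|Hp]; [left|right|left].
- by apply: piece Hl _ Hp => a b; rewrite Es; apply: linked_catl.
- by rewrite Es mem_cat mem_head orbT.
- apply: piece Hr _ Hp => a b Hab.
  by rewrite Es; apply: linked_catr; apply: (linked_catr [:: w]).
Qed.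

Lemma linked_through x y a b : linked [:: x; w; y] a b -> a = w \/ b = w.
Proof.
by rewrite /linked /= !inE !xpair_eqE => /orP [] /orP [] /andP [/eqP -> /eqP ->]; auto.
Qed.

Lemma expansion_linked_map s t y y' : expansion s t -> y != w -> y' != w ->
  linked s y y' -> linked t (m y) (m y').
Proof.
case=> [[_ ->] _ _|[l [r [x [y0 [R [-> _ _ -> _]]]]]]]; first exact: linked_map.
move=> Hy Hy'; rewrite (linked_splice l x [:: w]) => /or3P [|/linked_through|].
- by move/(linked_map m); rewrite map_rcons map_cons linked_splice => ->.
- by case=> E; [move: Hy|move: Hy']; rewrite E eqxx.
- by move/(linked_map m); rewrite map_rcons map_cons linked_splice => ->; rewrite !orbT.
Qed.

Lemma expansion_linked_detour s t z z' : expansion s t -> w \in s ->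
  linked detour z z' -> linked t z z'.
Proof.
case=> [[/negP Hw _] /Hw //|[l [r [x [y [R [_ _ _ -> /detour_orient [_ Ldet]]]]]]]] _.
by rewrite map_rcons map_cons linked_splice Ldet => ->; rewrite orbT.
Qed.

Lemma expansion_size s t : Q != [::] -> expansion s t -> size s <= size t.
Proof.
rewrite -size_eq0 => HQ [[_ ->]|[l [r [x [y [R [-> _ _ -> /detour_orient [pRQ _]]]]]]]].
  by rewrite size_map.
by rewrite !size_cat !size_map (perm_size pRQ) /=; lia.
Qed.

Lemma expansion_head s t : expansion s t -> head (m w) t = m (head w s).
Proof.
case=> [[Hw ->]|[l [r [x [y [R [-> _ _ -> _]]]]]]]; first by case: s Hw.
by case: l.
Qed.

Lemma expansion_last s t : expansion s t -> last (m w) t = m (last w s).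
Proof.
case=> [[_ ->]|[l [r [x [y [R [-> _ _ -> _]]]]]]]; first by rewrite last_map.
by rewrite !last_cat /= last_map.
Qed.

Lemma expansion_rcons s t y : expansion s t -> y != w ->
  expansion (rcons s y) (rcons t (m y)).
Proof.
case=> [[Hw ->]|[l [r [x [y0 [R [-> Hl Hr -> HR]]]]]]] Hy.
  by left; rewrite map_rcons mem_rcons in_cons negb_or eq_sym Hy.
right; exists l, (rcons r y), x, y0, R; split=> //.
- by rewrite rcons_cat.
- by rewrite -rcons_cons mem_rcons in_cons negb_or eq_sym Hy.
- by rewrite !rcons_cat -map_rcons.
Qed.

Lemma expansion_count (Ps : pred T) (Pt : pred U) s t :
  {in predC1 w, Ps =1 Pt \o m} -> (w \in s -> ~~ Ps w) -> expansion s t ->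
  count Ps s <= count Pt t.
Proof.
move=> HP Hw; have count_off p : w \notin p -> count Ps p = count Pt (map m p).
  by move=> Hp; rewrite count_map; apply: eq_in_count => y /(memPn Hp) /HP.
case=> [[Hws ->]|[l [r [x [y [R [Es Hl Hr -> _]]]]]]]; first by rewrite count_off.
have {}Hw : ~~ Ps w by apply: Hw; rewrite Es mem_cat mem_head orbT.
have Hwr : count Ps (w :: y :: r) = count Ps (y :: r) by rewrite /= (negbTE Hw).
by rewrite Es !count_cat Hwr !count_off //; lia.
Qed.

Definition expand s : seq U :=
  if w \in s then
    let i := index w s in
    map m (take i s) ++ (if m (nth w s i.-1) == u then Q else rev Q)
      ++ map m (drop i.+1 s)
  else map m s.

Lemma expansion_expand l r x y : w \notin rcons l x -> w \notin y :: r -> u != v ->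
  (m x = u /\ m y = v) \/ (m x = v /\ m y = u) ->
  expansion (rcons l x ++ w :: y :: r) (expand (rcons l x ++ w :: y :: r)).
Proof.
move=> Hl Hr Huv Hxy; right.
exists l, r, x, y, (if m x == u then Q else rev Q); split=> //.
  have Hi : index w (rcons l x ++ w :: y :: r) = size (rcons l x).
    by rewrite index_cat (negbTE Hl) /= eqxx addn0.
  rewrite /expand mem_cat mem_head orbT Hi take_size_cat //.
  rewrite drop_cat ltnNge leqnSn /= subSnn /=.
  by rewrite nth_cat size_rcons ltnSn nth_rcons ltnn eqxx.
case: Hxy => [[-> ->]|[-> ->]]; rewrite ?eqxx; first by left.
by rewrite eq_sym (negbTE Huv); right.
Qed.

Hypothesis m_inj : {in predC1 w &, injective m}.
Hypothesis m_notin_Q : {in predC1 w, forall y, m y \notin Q}.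

Lemma expansion_uniq s t : uniq Q -> expansion s t -> uniq s -> uniq t.
Proof.
have uniq_off p : w \notin p -> uniq p -> uniq (map m p).
  move=> Hp Up; rewrite map_inj_in_uniq // => a b /(memPn Hp) Ha /(memPn Hp) Hb.
  by apply: m_inj.
move=> UQ [[Hw ->]|[l [r [x [y [R [-> Hl Hr -> /detour_orient [pRQ _]]]]]]]].
  exact: uniq_off.
rewrite cat_uniq /= => /and3P [Ul /norP [_ Hlr] /andP [_ Ur]].
have Hperm : perm_eq (map m (rcons l x) ++ R ++ map m (y :: r))
    (R ++ map m (rcons l x ++ y :: r)) by rewrite map_cat perm_catCA.
rewrite (perm_uniq Hperm) cat_uniq (perm_uniq pRQ) UQ.
have Hlr' : w \notin rcons l x ++ y :: r by rewrite mem_cat negb_or Hl.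
rewrite uniq_off ?cat_uniq ?Ul ?Hlr ?Ur //= andbT.
apply/hasPn => _ /mapP [z Hz ->]; rewrite (perm_mem pRQ).
by apply: m_notin_Q; apply: (memPn Hlr').
Qed.

End Expansion.

Lemma uniq_mid (T : eqType) (l r : seq T) x w y :
  uniq (rcons l x ++ w :: y :: r) -> [/\ w \notin rcons l x, w \notin y :: r & x != y].
Proof.
rewrite cat_uniq /= => /and3P [_ /norP [Hw /norP [Hy _]] /andP [Hwr _]].
by split=> //; apply: contraNneq Hy => <-; rewrite mem_rcons mem_head.
Qed.

Lemma mem_pair_neq (T : eqType) (a b u v : T) : a \in [:: u; v] -> b \in [:: u; v] ->
  a != b -> (a = u /\ b = v) \/ (a = v /\ b = u).
Proof. by rewrite !inE => /orP [] /eqP -> /orP [] /eqP ->; rewrite ?eqxx; auto. Qed.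

(* H is obtained from the subgraph of G induced by the image of [m] and the induced
   path u Q v by contracting Q into the vertex [w], which sees only u and v. *)
Section Transport.
Variables (H G : sgraph) (w : H) (m : H -> G) (u v : G) (Q : seq G).
Hypotheses (symG : symmetric (adj G)) (symH : symmetric (adj H)).
Hypothesis irrH : irreflexive (adj H).
Hypothesis m_nbr_w : forall y, adj H w y -> m y \in [:: u; v].
Hypothesis m_inj : {in predC1 w &, injective m}.
Hypothesis m_adj : {in predC1 w &, forall y y', adj H y y' = adj G (m y) (m y')}.
Hypothesis Q_nonempty : Q != [::].
Hypothesis detour_uniq : uniq (detour u v Q).
Hypothesis detour_induced :
  {in detour u v Q &, forall z z', adj G z z' = linked (detour u v Q) z z'}.
Hypothesis m_notin_Q : {in predC1 w, forall y, m y \notin Q}.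
Hypothesis Q_nbr : {in Q & predC1 w, forall q y, adj G q (m y) -> m y \in [:: u; v]}.

Local Notation detour := (detour u v Q).
Local Notation expansion := (expansion w m u v Q).
Local Notation expand := (expand w m u Q).

Lemma nbr_w_neq y : adj H w y -> y != w.
Proof. by apply: contraTneq => ->; rewrite irrH. Qed.

Lemma w_degree c : uniq c -> count (adj H w) c <= 2.
Proof.
move=> Uc; rewrite -size_filter -(size_map m).
apply: (uniq_leq_size (s2 := [:: u; v])).
  rewrite map_inj_in_uniq ?filter_uniq // => y y'.
  by rewrite !mem_filter => /andP [/nbr_w_neq Hy _] /andP [/nbr_w_neq Hy' _]; apply: m_inj.
by move=> z /mapP [y]; rewrite mem_filter => /andP [/m_nbr_w Hy _] ->.
Qed.

Lemma Q_uniq : uniq Q.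
Proof. by move: detour_uniq; rewrite uniq_detour => /and4P []. Qed.

Lemma u_neq_v : u != v.
Proof. by move: detour_uniq; rewrite uniq_detour => /and4P []. Qed.

Lemma expansion_expand_path s x y : x != w -> y != w ->
  is_path_from_to s x y -> expansion s (expand s).
Proof.
move=> Hx Hy [Ws Us Hh Hl].
have [Hws|Hws] := boolP (w \in s); last by left; rewrite /expand (negbTE Hws).
case/splitPr: Hws Ws Us Hh Hl => l r' Ws Us Hh Hl.
case/lastP: l Ws Us Hh Hl => [|l x'] Ws Us Hh Hl; first by rewrite -Hh eqxx in Hx.
case: r' Ws Us Hh Hl => [|y' r] Ws Us Hh Hl; first by rewrite -Hl last_cat eqxx in Hy.
have [Hwl Hwr Hxy] := uniq_mid Us.
have [_ Hadj] := (walk_linked symH _).1 Ws.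
have Axw : adj H w x'.
  by rewrite symH Hadj //; apply/consec_linked; exists l, (y' :: r); left; rewrite cat_rcons.
have Ayw : adj H w y' by rewrite Hadj //; apply/consec_linked; exists (rcons l x'), r; left.
apply: expansion_expand => //; first exact: u_neq_v.
apply: mem_pair_neq; rewrite ?m_nbr_w //.
apply: contraNneq Hxy => Exy; apply/eqP.
by apply: m_inj Exy; rewrite inE nbr_w_neq.
Qed.

Lemma expand_path s x y : x != w -> y != w ->
  is_path_from_to s x y -> is_path_from_to (expand s) (m x) (m y).
Proof.
move=> Hx Hy Hs; have Es := expansion_expand_path Hx Hy Hs.
case: Hs => Ws Us Hh Hl.
have Hne : s != [::] by case: s Ws {Us Hh Hl Es}.
have Hne' : expand s != [::].
  by rewrite -size_eq0 -lt0n (leq_trans _ (expansion_size Q_nonempty Es)) // lt0n size_eq0.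
split.
- apply/walk_linked => //; split=> // z z' /(expansion_linked Es).
  case=> [[y1 [y2 [Hy1 Hy2 Hyy -> ->]]]|[_ Hzz]].
    by rewrite -m_adj ?inE //; apply: ((walk_linked symH _).1 Ws).2.
  by have [Hz Hz'] := linked_mem Hzz; rewrite detour_induced.
- exact: (expansion_uniq m_inj m_notin_Q Q_uniq Es).
- have := expansion_head Es; case: (expand s) Hne' => // z t _ /= ->.
  by case: s Hh Hne {Ws Us Hl Es} => //= z0 s0 ->.
- have := expansion_last Es; case/lastP: (expand s) Hne' => // t z _.
  rewrite !last_rcons => ->.
  by case/lastP: s Hl Hne {Ws Us Hh Es} => // s0 z0; rewrite !last_rcons => ->.
Qed.

Lemma m_in_Q y : y != w -> (m y \in Q) = false.
Proof. by move=> Hy; apply/negbTE/m_notin_Q; rewrite inE. Qed.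

Lemma Q_nbr_detour q y : q \in Q -> y != w -> adj G q (m y) -> m y \in detour.
Proof.
move=> Hq Hy /(Q_nbr Hq (y := y)); rewrite inE => /(_ Hy).
by rewrite mem_detour !inE => /orP [] ->; rewrite ?orbT.
Qed.

Lemma expansion_adj s1 t1 s2 t2 z1 z2 : expansion s1 t1 -> expansion s2 t2 ->
  z1 \in t1 -> z2 \in t2 -> adj G z1 z2 ->
  (exists y1 y2, [/\ y1 \in [predD1 s1 & w], y2 \in [predD1 s2 & w], adj H y1 y2,
                     z1 = m y1 & z2 = m y2])
  \/ (linked detour z1 z2 /\ (w \in s1 \/ w \in s2)).
Proof.
move=> E1 E2 /(expansion_mem E1) [[y1 Hy1 [Hy1w ->]]|[Hw1 HQ1]].
  move=> /(expansion_mem E2) [[y2 Hy2 [Hy2w ->]]|[Hw2 HQ2]] A.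
    by left; exists y1, y2; rewrite !inE Hy1 Hy2 Hy1w Hy2w m_adj ?inE.
  rewrite symG in A; have Hm := Q_nbr_detour HQ2 Hy1w A.
  by right; split; [rewrite -detour_induced 1?symG // mem_detour HQ2 orbT | right].
move=> /(expansion_mem E2) [[y2 Hy2 [Hy2w ->]]|[Hw2 HQ2]] A.
  have Hm := Q_nbr_detour HQ1 Hy2w A.
  by right; split; [rewrite -detour_induced // mem_detour HQ1 orbT | left].
by right; split; [rewrite -detour_induced // !mem_detour ?HQ1 ?HQ2 ?orbT | left].
Qed.

Lemma expansion_hole z c t : hole (z :: c) -> z != w -> expansion (z :: c) t -> hole t.
Proof.
move=> Hc Hz Et; have [Uc Sc Hadj] := (hole_linked z c).1 Hc.
have Et' := expansion_rcons Et Hz.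
have mem_closed y : y \in rcons (z :: c) z -> y \in z :: c.
  by rewrite mem_rcons in_cons => /orP [/eqP ->|]; rewrite ?mem_head.
have := expansion_size Q_nonempty Et; have := expansion_head Et.
case: t Et Et' => [|z' t] Et Et' //= Ez Sz; subst z'.
apply/hole_linked; split.
- exact: (expansion_uniq m_inj m_notin_Q Q_uniq Et).
- exact: leq_trans Sc Sz.
move=> a b Ha Hb; apply/idP/idP => [Hab|].
  case: (expansion_adj Et Et Ha Hb Hab) => [[y1 [y2 [Hy1 Hy2 A -> ->]]]|[Hd Hw]].
    move: Hy1 Hy2; rewrite !inE => /andP [Hy1w Hy1] /andP [Hy2w Hy2].
    by apply: (expansion_linked_map Et') => //; rewrite -Hadj.
  apply: (expansion_linked_detour Et') Hd.
  by rewrite mem_rcons in_cons; case: Hw => ->; rewrite ?orbT.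
case/(expansion_linked Et') => [[y1 [y2 [Hy1 Hy2 L -> ->]]]|[_ L]].
  have [/mem_closed A /mem_closed B] := linked_mem L.
  by rewrite -m_adj ?inE // Hadj.
by have [A B] := linked_mem L; rewrite detour_induced.
Qed.

Lemma contains_wheel_expansion z c t h : hole (z :: c) -> z != w ->
  expansion (z :: c) t -> h \notin z :: c -> h != w -> (w \in z :: c -> ~~ adj H h w) ->
  3 <= count (adj H h) (z :: c) -> contains_wheel G.
Proof.
move=> Hc Hz Et Hh hw Hhw Hcnt; exists t, (m h); split.
- exact: expansion_hole Hc Hz Et.
- apply/negP => /(expansion_mem Et) [[y Hy [Hyw Ey]]|[_ HQ]].
    have Ehy : h = y by apply: m_inj; rewrite ?inE.
    by rewrite Ehy Hy in Hh.
  by rewrite m_in_Q in HQ.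
apply: leq_trans Hcnt (expansion_count _ Hhw Et) => y Hy.
by rewrite /= m_adj ?inE.
Qed.

Lemma contains_wheel_transport : contains_wheel H -> contains_wheel G.
Proof.
move=> [c [h [Hc Hh Hcnt]]].
have hw : h != w.
  by apply: contraTneq Hcnt => ->; rewrite -ltnNge ltnS w_degree //; case: Hc.
have [Hwc|Hwc] := boolP (w \in c); last first.
  case: c Hc Hh Hcnt Hwc => [[]//|z c] Hc Hh Hcnt Hwc.
  apply: (contains_wheel_expansion (t := map m (z :: c)) (h := h) Hc) => //.
  - by apply/eqP => Ez; rewrite -Ez mem_head in Hwc.
  - by left.
  - by move/(negP Hwc).
have [x [y [r [Hc' Hp]]]] := hole_rot_mid Hc Hwc.
have [Uc' _ Hlinked] := (hole_linked _ _).1 Hc'.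
have [Hwl Hwr Hxy] := uniq_mid (l := [::]) Uc'.
have Axw : adj H w x by rewrite symH Hlinked ?inE ?eqxx ?orbT // /linked mem_head.
have Ayw : adj H w y by rewrite Hlinked ?inE ?eqxx ?orbT // /linked /= !inE eqxx orbT.
have Hh' : h \notin [:: x, w, y & r] by rewrite (perm_mem Hp).
have Hhw : ~~ adj H h w.
  apply/negP => Ahw; have := w_degree (c := [:: h; x; y]); rewrite /= symH Ahw Axw Ayw.
  move: Hh'; rewrite !inE !negb_or => /and4P [Hhx _ Hhy _].
  by rewrite Hhx Hhy Hxy => /(_ isT).
have Hx : x != w by move: Hwl; rewrite inE eq_sym.
have Et : expansion [:: x, w, y & r] (expand [:: x, w, y & r]).
  apply: (expansion_expand_path (x := x) (y := last y r)) => //.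
  - exact: (memPn Hwr _ (mem_last y r)).
  - by split=> //; apply: hole_walk.
apply: (contains_wheel_expansion (h := h) Hc' Hx Et) => //.
by rewrite (permP Hp).
Qed.

Section ISK4Transport.
Variables (a : 'I_4 -> H) (P : 'I_4 -> 'I_4 -> seq H).
Hypothesis model : isk4_model a P.

Let P' (i j : 'I_4) := expand (P i j).

Lemma isk4_branch_neq_w i : a i != w.
Proof.
apply/eqP => Ei; have [s Us] := isk4_branch_degree symH irrH model i.
by rewrite Ei; apply/negP; rewrite -ltnNge ltnS w_degree.
Qed.

Lemma expansion_isk4_path (i j : 'I_4) : i < j -> expansion (P i j) (P' i j).
Proof.
case: model => _ Hpath _ _ _ Hij.
exact: expansion_expand_path (isk4_branch_neq_w i) (isk4_branch_neq_w j) (Hpath _ _ Hij).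
Qed.

Lemma mem_isk4_path_codom (i j : 'I_4) z : i < j -> z \in P' i j -> z \in codom (m \o a) ->
  exists2 y, y \in P i j & y \in codom a /\ z = m y.
Proof.
move=> Hij /(expansion_mem (expansion_isk4_path Hij)) [[y Hy [Hyw ->]]|[_ HQ]].
  move=> /codomP [k /= Ek]; exists y => //; split=> //.
  by rewrite (m_inj _ _ Ek) ?inE ?isk4_branch_neq_w ?codom_f.
by case/codomP=> k /= Ek; rewrite Ek m_in_Q ?isk4_branch_neq_w in HQ.
Qed.

Lemma isk4_transport_meet (i j k l : 'I_4) z : i < j -> k < l -> (i, j) != (k, l) ->
  z \in P' i j -> z \in P' k l -> z \in codom (m \o a).
Proof.
case: model => _ _ _ Hmeet _ Hij Hkl Hne.
move=> /(expansion_mem (expansion_isk4_path Hij)) [[y Hy [Hyw ->]]|[Hw HQ]].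
  move=> /(expansion_mem (expansion_isk4_path Hkl)) [[y' Hy' [Hyw' Eyy']]|[_ HQ]].
    have Eyy : y = y' by apply: m_inj; rewrite ?inE.
    subst y'; case/codomP: (Hmeet _ _ _ _ _ Hij Hkl Hne Hy Hy') => t ->.
    exact: (codom_f (m \o a)).
  by rewrite m_in_Q in HQ.
move=> /(expansion_mem (expansion_isk4_path Hkl)) [[y' _ [Hyw' Ez]]|[Hw' _]].
  by rewrite Ez m_in_Q in HQ.
case/codomP: (Hmeet _ _ _ _ _ Hij Hkl Hne Hw Hw') => t Et.
by move: (isk4_branch_neq_w t); rewrite -Et eqxx.
Qed.

Lemma isk4_transport_induced (i j k l : 'I_4) z z' : i < j -> k < l ->
  z \in P' i j -> z' \in P' k l -> adj G z z' ->
  exists i' j' : 'I_4, i' < j' /\ consec (P' i' j') z z'.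
Proof.
case: model => _ _ _ _ Hind Hij Hkl Hz Hz' A.
case: (expansion_adj (expansion_isk4_path Hij) (expansion_isk4_path Hkl) Hz Hz' A).
  case=> y [y' [/andP [Hyw Hy] /andP [Hyw' Hy'] Ayy' -> ->]].
  have [i' [j' [Hij' /consec_linked L]]] :
      exists i' j' : 'I_4, i' < j' /\ consec (P i' j') y y'.
    by apply: Hind Ayy'; [exists i, j | exists k, l].
  exists i', j'; split=> //; apply/consec_linked.
  exact: expansion_linked_map (expansion_isk4_path Hij') Hyw Hyw' L.
case=> L [Hw|Hw]; [exists i, j | exists k, l]; split=> //; apply/consec_linked.
  exact: expansion_linked_detour (expansion_isk4_path Hij) Hw L.
exact: expansion_linked_detour (expansion_isk4_path Hkl) Hw L.
Qed.

Lemma isk4_transport_model : isk4_model (m \o a) P'.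
Proof.
have aw := isk4_branch_neq_w.
case: model => a_inj Hpath Hend _ _; split.
- by move=> i j /= /m_inj Eij; apply/a_inj/Eij; rewrite inE aw.
- by move=> i j Hij; apply: expand_path (aw i) (aw j) (Hpath _ _ Hij).
- move=> i j z Hij Hz /(mem_isk4_path_codom Hij Hz) [y Hy [Hya ->]].
  by case: (Hend _ _ _ Hij Hy Hya) => ->; [left|right].
- exact: isk4_transport_meet.
move=> z z' [i [j [Hij Hz]]] [k [l [Hkl Hz']]].
exact: isk4_transport_induced Hij Hkl Hz Hz'.
Qed.

End ISK4Transport.

Lemma ISK4_wheel_free_transport : ISK4_wheel_free G -> ISK4_wheel_free H.
Proof.
case=> HG HW; split=> [[a [P model]]|/contains_wheel_transport //].
by apply: HG; exists (m \o a), (fun i j => expand (P i j)); apply: isk4_transport_model.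
Qed.

End Transport.

Lemma split_two (T : eqType) (s : seq T) x y : x \in s -> y \in s -> x != y ->
  (exists l M r, s = l ++ x :: M ++ y :: r) \/ (exists l M r, s = l ++ y :: M ++ x :: r).
Proof.
case/splitPr=> l r; rewrite mem_cat in_cons => /or3P [Hy|/eqP ->|Hy]; last 2 first.
- by rewrite eqxx.
- by case/splitPr: Hy => M r'; left; exists l, M, r'.
by case/splitPr: Hy => l' M; right; exists l', M, r; rewrite -catA.
Qed.

Section ChordlessPath.
Variable G : sgraph.
Hypotheses (symG : symmetric (adj G)) (irrG : irreflexive (adj G)).

Lemma path_shortcut l x M y r a b : is_path_from_to (rcons l x ++ M ++ y :: r) a b ->
  adj G x y -> is_path_from_to (rcons l x ++ y :: r) a b.
Proof.
have Hsub : subseq (rcons l x ++ y :: r) (rcons l x ++ M ++ y :: r).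
  by rewrite cat_subseq ?suffix_subseq.
case=> /(walk_linked symG) [_ Hadj] Us Hh Hl Axy; split.
- apply/(walk_linked symG); split; first by rewrite -size_eq0 size_cat size_rcons.
  move=> c d; rewrite (linked_splice l x [::]) => /or3P [L|L|L].
  + by apply: Hadj; rewrite linked_splice L.
  + move: L; rewrite /linked /= !inE !xpair_eqE.
    by case/orP=> /andP [/eqP -> /eqP ->]; rewrite // symG.
  + by apply: Hadj; rewrite linked_splice L !orbT.
- exact: subseq_uniq Hsub Us.
- by case: l Hh {Hsub Hadj Us Hl}.
- by rewrite -Hl !last_cat.
Qed.

Lemma chord_split s z z' : z \in s -> z' \in s -> adj G z z' -> ~~ linked s z z' ->
  exists l x M y r, [/\ s = rcons l x ++ M ++ y :: r, M != [::] & adj G x y].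
Proof.
move=> Hz Hz' A NL; have Hzz' : z != z' by apply: contraTneq A => ->; rewrite irrG.
case: (split_two Hz Hz' Hzz') => [[l [M [r Es]]]|[l [M [r Es]]]].
  exists l, z, M, z', r; rewrite cat_rcons; split=> //.
  apply: contraNneq NL => EM; rewrite Es EM /linked.
  by apply/orP; left; apply/pairsP; exists l, r.
exists l, z', M, z, r; rewrite cat_rcons symG; split=> //.
apply: contraNneq NL => EM; rewrite Es EM /linked.
by apply/orP; right; apply/pairsP; exists l, r.
Qed.

Lemma chordless_subpath s a b : is_path_from_to s a b -> exists2 s', subseq s' s &
  is_path_from_to s' a b /\ {in s' &, forall z z', adj G z z' -> linked s' z z'}.
Proof.
elim: {s}_.+1 {-2}s (ltnSn (size s)) => // n IH s Hsz Hs.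
pose chord z := [pred z' | adj G z z' && ~~ linked s z z'].
have [/hasP [z Hz /hasP [z' Hz' /andP [A NL]]]|/hasPn Hno] :=
  boolP (has (fun z => has (chord z) s) s); last first.
  exists s => //; split=> // z z' Hz Hz' A; apply/negPn/negP => NL.
  by move/hasPn: (Hno z Hz) => /(_ z' Hz'); rewrite inE A NL.
have [l [x [M [y [r [Es HM Axy]]]]]] := chord_split Hz Hz' A NL.
rewrite Es in Hs Hsz; have Hsz' : size (rcons l x ++ y :: r) < n.
  by move: Hsz HM; rewrite -size_eq0 !size_cat /=; lia.
have [s' Hsub Hs'] := IH _ Hsz' (path_shortcut Hs Axy).
exists s' => //; apply: subseq_trans Hsub _.
by rewrite Es cat_subseq ?suffix_subseq.
Qed.

End ChordlessPath.

Lemma path_adj_in (G : sgraph) (S : {set G}) x p : path (adj_in S) x p -> {subset p <= S}.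
Proof.
elim: p x => [|y p IH] x //= /andP [/and3P [_ Hy _] Hp] z.
by rewrite in_cons => /orP [/eqP ->|/(IH _ Hp)].
Qed.

Section TwoCutset.
Variable G : sgraph.
Hypotheses (symG : symmetric (adj G)) (irrG : irreflexive (adj G)).

Lemma adj_in_sym (S : {set G}) : symmetric (adj_in S).
Proof. by move=> x y; rewrite /adj_in andbCA symG. Qed.

Lemma connected_in_no_1cutset (x : G) : ~ has_1cutset G -> connected_in (~: [set x]).
Proof.
move=> no_cut y z Hy Hz; apply/idPn => Nyz; apply: no_cut; exists x => conn.
by rewrite conn in Nyz.
Qed.

Lemma component_nbr (S C : {set G}) x y :
  is_component S C -> x \in C -> y \in S -> adj G x y -> y \in C.
Proof.
case=> /subsetP CS _ HC Hx Hy A; rewrite (HC _ _ Hx Hy).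
by apply: connect1; rewrite /adj_in (CS _ Hx) Hy A.
Qed.

Lemma component_proper (S C : {set G}) : is_component S C -> ~ connected_in S ->
  exists2 y, y \in S & y \notin C.
Proof.
case=> CS _ HC Hdis.
have [/subsetP SC|/subsetPn [y]] := boolP (S \subset C); last by exists y.
by case: Hdis => x y Hx Hy; rewrite -(HC x y (SC _ Hx) Hy); apply: SC.
Qed.

Variables (u v : G) (C : {set G}).
Hypothesis HC : is_component (~: [set u; v]) C.

Lemma notin_component x : x \in [set u; v] -> x \notin C.
Proof. by case: HC => /subsetP CS _ _ Hx; apply: contraL Hx => /CS; rewrite inE. Qed.

(* Only u and v have neighbours both inside and outside C. *)
Lemma path_outside_component t t' x p : [set t; t'] = [set u; v] ->
  path (adj_in (~: [set t])) x p -> x \notin C -> last x p = t' ->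
  connect (adj_in (~: C)) x t'.
Proof.
move=> Ett'; elim: p x => [|x1 p IH] x /=; first by move=> _ _ ->.
case/andP=> /and3P [Hx _ Axx1] Hp xC Hl.
have [->|Hxt'] := eqVneq x t'; first exact: connect0.
have xS : x \in ~: [set u; v].
  by rewrite -Ett' !inE negb_or Hxt' andbT; rewrite !inE in Hx.
have x1C : x1 \notin C.
  by apply: contra xC => x1C; apply: (component_nbr HC x1C xS); rewrite symG.
apply: connect_trans (IH _ Hp x1C Hl); apply: connect1.
by rewrite /adj_in !inE xC x1C.
Qed.

Lemma connect_uv_outside_component : ~ has_1cutset G -> u != v ->
  ~ connected_in (~: [set u; v]) -> connect (adj_in (~: C)) u v.
Proof.
move=> no_cut Huv Hdis; have [y Hy HyC] := component_proper HC Hdis.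
have reach t t' : [set t; t'] = [set u; v] -> t != t' -> connect (adj_in (~: C)) y t'.
  move=> Ett' Htt'; have Hyt : y \in ~: [set t].
    by move: Hy; rewrite -Ett' !inE negb_or => /andP [].
  have Ht' : t' \in ~: [set t] by rewrite !inE eq_sym.
  case/connectP: (connected_in_no_1cutset no_cut Hyt Ht') => p Hp Hl.
  exact: path_outside_component Ett' Hp HyC (esym Hl).
apply: connect_trans (reach u v erefl Huv).
by rewrite (sym_connect_sym (adj_in_sym _)) (reach v u) 1?eq_sym // setUC.
Qed.

Lemma two_cutset_detour : ~ has_1cutset G -> u != v -> ~~ adj G u v ->
  ~ connected_in (~: [set u; v]) ->
  exists Q, [/\ Q != [::], uniq (detour u v Q),
     {in detour u v Q &, forall z z', adj G z z' = linked (detour u v Q) z z'},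
     {subset Q <= ~: C} & {in Q & C, forall q x, ~~ adj G q x}].
Proof.
move=> no_cut Huv Nuv Hdis.
case/connectP: (connect_uv_outside_component no_cut Huv Hdis) => p Hp Hl.
case: (shortenP Hp) Hl => p' Hp' Up' _ Hl.
have Hpath : is_path_from_to (u :: p') u v.
  by split=> //; apply: sub_path Hp' => x y /and3P [].
have HC' : {subset u :: p' <= ~: C}.
  move=> x; rewrite in_cons => /orP [/eqP ->|/(path_adj_in Hp') //].
  by rewrite inE notin_component // !inE eqxx.
have [s Hs [[Ws Us Hh Hl'] Hch]] := chordless_subpath symG irrG Hpath.
case: s Hs Ws Us Hh Hl' Hch => [|z s] // Hs Ws Us /= Hh Hl' Hch; subst z.
case/lastP: s Hs Ws Us Hl' Hch => [|Q y] Hs Ws Us Hl' Hch.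
  by rewrite /= in Hl'; rewrite Hl' eqxx in Huv.
rewrite last_rcons in Hl'; subst y.
have EQ : u :: rcons Q v = detour u v Q by rewrite /detour cats1.
rewrite EQ in Hs Ws Us Hch.
have QC : {subset Q <= ~: C}.
  by move=> q Hq; apply: HC' (mem_subseq Hs _); rewrite mem_detour Hq orbT.
exists Q; split=> //.
- by apply: contraNneq Nuv => EQ0; move: Ws; rewrite EQ0 /= andbT.
- move=> z z' Hz Hz'; apply/idP/idP; first exact: Hch.
  exact: ((walk_linked symG _).1 Ws).2.
move=> q x Hq Hx; apply/negP => A; have := QC _ Hq; rewrite inE => /negP; apply.
apply: (component_nbr HC Hx); last by rewrite symG.
move: Us; rewrite uniq_detour => /and4P [Hu Hv _ _].
by rewrite !inE negb_or (memPn Hu) ?(memPn Hv).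
Qed.

End TwoCutset.

Section Closures.
Variables (G : sgraph) (u v : G) (C : {set G}).
Hypotheses (symG : symmetric (adj G)) (irrG : irreflexive (adj G)).

Lemma is_uv_adj x y : adj G u v -> is_uv u v x y -> adj G x y.
Proof. by move=> Auv /orP [] /andP [/eqP -> /eqP ->]; rewrite // symG. Qed.

Lemma cl_ISK4_wheel_free : adj G u v -> ISK4_wheel_free G -> ISK4_wheel_free (cl u v C).
Proof.
move=> Auv; apply: (@ISK4_wheel_free_induced _ _ (fun x : cl u v C => val x)).
  exact: val_inj.
by move=> x y; rewrite /= orb_idr // => /is_uv_adj; apply.
Qed.

(* The image of the subdivision vertex [None] is irrelevant. *)
Definition cl_star_val (o : cl_star u v C) : G := if o is Some x then val x else u.

Lemma is_uvC x y : is_uv u v x y = is_uv u v y x.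
Proof. by rewrite /is_uv orbC; congr (_ || _); apply: andbC. Qed.

Lemma cl_star_sym : symmetric (adj (cl_star u v C)).
Proof. by move=> [x|] [y|] //=; rewrite symG is_uvC. Qed.

Lemma cl_star_irr : irreflexive (adj (cl_star u v C)).
Proof. by move=> [x|] //=; rewrite irrG. Qed.

Lemma cl_star_val_nbr y : adj (cl_star u v C) None y -> cl_star_val y \in [:: u; v].
Proof. by case: y => [x|] //=; rewrite !inE. Qed.

Lemma cl_star_val_inj : {in predC1 None &, injective cl_star_val}.
Proof. by move=> [x|] [y|] //= _ _ /val_inj ->. Qed.

Lemma cl_star_val_adj : ~~ adj G u v ->
  {in predC1 None &, forall y y',
    adj (cl_star u v C) y y' = adj G (cl_star_val y) (cl_star_val y')}.
Proof.
move=> Nuv [x|] [y|] //= _ _; rewrite andb_idr // => A; apply: contraNN Nuv.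
by case/orP=> /andP [/eqP Ex /eqP Ey]; move: A; rewrite Ex Ey // symG.
Qed.

Lemma mem_clV (x : clV u v C) : [|| val x \in C, val x == u | val x == v].
Proof. by case: x => x /=; rewrite !inE orbA. Qed.

Section Detour.
Variable Q : seq G.
Hypotheses (Q_uniq : uniq (detour u v Q)) (Q_C : {subset Q <= ~: C}).
Hypothesis Q_C_nadj : {in Q & C, forall q x, ~~ adj G q x}.

Lemma cl_star_val_notin_Q : {in predC1 None, forall y, cl_star_val y \notin Q}.
Proof.
move=> [x|] // _ /=; apply/negP => Hq.
move: Q_uniq; rewrite uniq_detour => /and4P [Hu Hv _ _].
case/or3P: (mem_clV x) => [HxC|/eqP Ex|/eqP Ex].
- by move: (Q_C Hq); rewrite inE HxC.
- by rewrite -Ex Hq in Hu.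
- by rewrite -Ex Hq in Hv.
Qed.

Lemma cl_star_val_Q_nbr : {in Q & predC1 None, forall q y,
  adj G q (cl_star_val y) -> cl_star_val y \in [:: u; v]}.
Proof.
move=> q [x|] Hq //= _ A; rewrite !inE.
case/or3P: (mem_clV x) => [HxC|->|->]; rewrite ?orbT //.
by rewrite (negbTE (Q_C_nadj Hq HxC)) in A.
Qed.

End Detour.

Lemma cl_star_ISK4_wheel_free : ~~ adj G u v -> u != v -> ~ has_1cutset G ->
  ~ connected_in (~: [set u; v]) -> is_component (~: [set u; v]) C ->
  ISK4_wheel_free G -> ISK4_wheel_free (cl_star u v C).
Proof.
move=> Nuv Huv no_cut Hdis HC.
have [Q [Q0 UQ Hind QC QCn]] := two_cutset_detour symG irrG HC no_cut Huv Nuv Hdis.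
exact: (@ISK4_wheel_free_transport (cl_star u v C) G None cl_star_val u v Q symG
  cl_star_sym cl_star_irr cl_star_val_nbr cl_star_val_inj (cl_star_val_adj Nuv) Q0 UQ Hind
  (cl_star_val_notin_Q UQ QC) (cl_star_val_Q_nbr QCn)).
Qed.

End Closures.

Theorem mainTheorem4 (G : sgraph) :
  simple G -> ISK4_wheel_free G -> ~ has_1cutset G ->
  forall u v : G, is_2cutset u v ->
  forall C : {set G}, is_component (~: [set u; v]) C ->
  ISK4_wheel_free (cl u v C) \/ ISK4_wheel_free (cl_star u v C).
Proof.
move=> [symG irrG] HG no_cut u v [Huv Hdis] C HC.
have [Auv|Nuv] := boolP (adj G u v).
  by left; apply: cl_ISK4_wheel_free.
by right; apply: cl_star_ISK4_wheel_free.
Qed.
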